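(* Assume the hypotheses of the Conjugacy result stated in the context, and let $\hat\Phi$ be as defined in the context. For every $x_0\in\mathbb{R}$, no two distinct points of $\hat\Phi^{-1}(x_0)$ can be joined by a horizontal curve in $\mathbb{R}^d$.
   Context: The hypotheses of the Conjugacy result are as follows. $F:\mathbb{T}^d\to\mathbb{T}^d$ is $C^1$ with $DF$ invertible everywhere, and $F(z)=(Mz+G(z))\bmod1$ with $M$ an integer matrix and $G$ continuous and $\mathbb{Z}^d$-periodic. $M$ has an integer eigenvalue $m$ with $|m|>1$, with right and left eigenvectors $v_m^R$ and $v_m^L$, where $v_m^L$ is chosen with integer entries. $F$ has a $(K,\alpha)$-cone system with respect to $w=v_m^R/|v_m^R|$ and $W=(v_m^L)^\perp$. Cone system: write each tangent vector as $v=aw+b=(a,b)$ with $b\in W$, and set $(a',b')=DF(z)v$. With $K>1$ and $\alpha>0$, for all $z$ and all $v$ with $|b|\le\alpha|a|$ one has $|b'|<\alpha|a'|$ and $|a'|>K|a|$; and $\|DF(z)u\|<K\|u\|$ for every $u$ outside the cone. A horizontal curve is a differentiable curve whose tangent vector at every point lies in the cone $\{(a,b):|b|<\alpha|a|\}$ at that point. Let $\hat F(x)=Mx+G(x)$ and $k=\min\{|v_m^L\cdot x|:x\in\mathbb{Z}^d,\ v_m^L\cdot x\ne0\}$. Define $\hat\Phi(x)=k^{-1}\lim_{n\to\infty}m^{-n}v_m^L\cdot\hat F^n(x)$; this limit exists and $\hat\Phi$ is continuous. *)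

From Stdlib Require Import Reals ZArith.
From mathcomp Require Import ssreflect ssrfun ssrbool eqtype ssrnat seq fintype bigop.

Set Implicit Arguments.
Unset Strict Implicit.

Local Open Scope R_scope.

Definition vec (d : nat) := 'I_d -> R.
Definition mat (d : nat) := 'I_d -> 'I_d -> R.

Definition vsum (d : nat) (f : 'I_d -> R) : R := \big[Rplus/0]_(i < d) f i.
Definition vzero (d : nat) : vec d := fun _ => 0.
Definition vadd (d : nat) (u v : vec d) : vec d := fun i => u i + v i.
Definition vsub (d : nat) (u v : vec d) : vec d := fun i => u i - v i.
Definition vscal (d : nat) (c : R) (u : vec d) : vec d := fun i => c * u i.
Definition dot (d : nat) (u v : vec d) : R := vsum (fun i => u i * v i).
Definition vnorm (d : nat) (u : vec d) : R := sqrt (dot u u).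

Definition mapply (d : nat) (A : mat d) (v : vec d) : vec d :=
  fun i => vsum (fun j => A i j * v j).
Definition mmul (d : nat) (A B : mat d) : mat d :=
  fun i j => vsum (fun l => A i l * B l j).
Definition idm (d : nat) : mat d := fun i j => if i == j then 1 else 0.

Definition zvec (d : nat) (n : 'I_d -> Z) : vec d := fun i => IZR (n i).
Definition zmat (d : nat) (M : 'I_d -> 'I_d -> Z) : mat d := fun i j => IZR (M i j).

Definition hatF (d : nat) (M : 'I_d -> 'I_d -> Z) (G : vec d -> vec d) (x : vec d) : vec d :=
  vadd (mapply (zmat M) x) (G x).

Definition vcontinuous (d : nat) (f : vec d -> vec d) : Prop :=
  forall x eps, 0 < eps -> exists delta, 0 < delta /\
    forall y, vnorm (vsub y x) < delta -> vnorm (vsub (f y) (f x)) < eps.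

Definition frechet_deriv (d : nat) (f : vec d -> vec d) (L : mat d) (x : vec d) : Prop :=
  forall eps, 0 < eps -> exists delta, 0 < delta /\
    forall h, vnorm h < delta ->
      vnorm (vsub (vsub (f (vadd x h)) (f x)) (mapply L h)) <= eps * vnorm h.

Definition mcontinuous (d : nat) (DF : vec d -> mat d) : Prop :=
  forall x eps, 0 < eps -> exists delta, 0 < delta /\
    forall y, vnorm (vsub y x) < delta -> forall i j, Rabs (DF y i j - DF x i j) < eps.

(* Decomposition v = a w + b with b in W = vL^perp (requires vL . w <> 0) *)
Definition cone_a (d : nat) (vL w : vec d) (v : vec d) : R := dot vL v / dot vL w.
Definition cone_b (d : nat) (vL w : vec d) (v : vec d) : vec d :=
  vsub v (vscal (cone_a vL w v) w).

Definition in_cone (d : nat) (vL w : vec d) (alpha : R) (v : vec d) : Prop :=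
  vnorm (cone_b vL w v) <= alpha * Rabs (cone_a vL w v).
Definition in_open_cone (d : nat) (vL w : vec d) (alpha : R) (v : vec d) : Prop :=
  vnorm (cone_b vL w v) < alpha * Rabs (cone_a vL w v).

Definition cone_system (d : nat) (DF : vec d -> mat d) (w vL : vec d) (K alpha : R) : Prop :=
  1 < K /\ 0 < alpha /\
  forall z,
    (forall v, v <> @vzero d -> in_cone vL w alpha v ->
        in_open_cone vL w alpha (mapply (DF z) v) /\
        K * Rabs (cone_a vL w v) < Rabs (cone_a vL w (mapply (DF z) v))) /\
    (forall u, ~ in_cone vL w alpha u -> vnorm (mapply (DF z) u) < K * vnorm u).

Definition deriv01 (f : R -> R) (l t : R) : Prop :=
  forall eps, 0 < eps -> exists delta, 0 < delta /\
    forall h, h <> 0 -> Rabs h < delta -> 0 <= t + h <= 1 ->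
      Rabs ((f (t + h) - f t) / h - l) < eps.

Definition joined_by_horizontal_curve (d : nat) (vL w : vec d) (alpha : R) (x y : vec d) : Prop :=
  exists (gamma gamma' : R -> vec d),
    gamma 0 = x /\ gamma 1 = y /\
    forall t, 0 <= t <= 1 ->
      (forall i, deriv01 (fun s => gamma s i) (gamma' t i) t) /\
      in_open_cone vL w alpha (gamma' t).

(* The sequence whose limit defines hatPhi(x) *)
Definition Phi_seq (d : nat) (M : 'I_d -> 'I_d -> Z) (G : vec d -> vec d)
    (m : Z) (vL : 'I_d -> Z) (k : R) (x : vec d) (n : nat) : R :=
  / k * (/ (IZR m ^ n) * dot (zvec vL) (iter n (hatF M G) x)).

(* Let gamma be a horizontal curve from x to y, F = hatF, and D n = vL.(F^n y - F^n x).
   On the cone, vL.v is a nonzero multiple of the w-component a of v, so by the mean value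
   theorem D 0 <> 0; Cauchy's mean value theorem applied to F^n o gamma and F^(n+1) o gamma,
   together with the expansion |a'| > K |a| of the cone system, gives |D (n+1)| >= K |D n|.
   Hence D is unbounded.  Since vL is a left eigenvector, D (n+1) = m D n + O(1), the error
   being bounded because vL.G is continuous and periodic; once |D n| is large it therefore
   grows like |m|^n, and hatPhi y - hatPhi x = lim D n / (k m^n) cannot vanish. *)

From Stdlib Require Import Reals Lra.
From mathcomp Require Import all_boot all_order all_algebra.
From mathcomp Require Import boolp classical_sets reals topology normedtype.
From mathcomp Require Import Rstruct Rstruct_topology.

Set Implicit Arguments.
Unset Strict Implicit.
Local Open Scope R_scope.

Section FiniteSums.
Variable d : nat.
Implicit Types f g : 'I_d -> R.

Lemma vsum_ext f g : (forall i, f i = g i) -> vsum f = vsum g.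
Proof. by move=> fg; apply: eq_bigr => i _. Qed.

Lemma vsum_add f g : vsum (fun i => f i + g i) = vsum f + vsum g.
Proof. exact: big_split. Qed.

Lemma vsum_scal c f : vsum (fun i => c * f i) = c * vsum f.
Proof. by rewrite /vsum big_distrr. Qed.

Lemma vsum_sub f g : vsum (fun i => f i - g i) = vsum f - vsum g.
Proof.
have -> : vsum (fun i => f i - g i) = vsum (fun i => f i + -1 * g i).
  by apply: vsum_ext => i; ring.
by rewrite vsum_add vsum_scal; ring.
Qed.

Lemma vsum_const1 : vsum (fun _ : 'I_d => 1) = INR d.
Proof.
rewrite /vsum big_const_ord; elim: d => // n IH.
by rewrite iterS IH S_INR Rplus_comm.
Qed.

Lemma vsum_exch (F : 'I_d -> 'I_d -> R) :
  vsum (fun i => vsum (fun j => F i j)) = vsum (fun j => vsum (fun i => F i j)).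
Proof. exact: exchange_big. Qed.

Lemma vsum_le f g : (forall i, f i <= g i) -> vsum f <= vsum g.
Proof.
move=> fg; apply: (big_rec2 (fun a b => a <= b)) => [|i a b _ ab]; first lra.
exact: Rplus_le_compat.
Qed.

Lemma vsum_ge0 f : (forall i, 0 <= f i) -> 0 <= vsum f.
Proof. by move=> f0; apply: (big_ind (fun x => 0 <= x)) => //; [lra | move=> *; lra]. Qed.

Lemma vsum_ge_term f j : (forall i, 0 <= f i) -> f j <= vsum f.
Proof.
move=> f0; rewrite /vsum (bigD1 j) //=.
have : 0 <= \big[Rplus/0]_(i < d | i != j) f i.
  by apply: (big_ind (fun x => 0 <= x)) => //; [lra | move=> *; lra].
by rewrite -{1}(Rplus_0_r (f j)); apply: Rplus_le_compat_l.
Qed.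

Lemma Rabs_vsum f : Rabs (vsum f) <= vsum (fun i => Rabs (f i)).
Proof.
apply: (big_rec2 (fun a b => Rabs a <= b)) => [|i a b _ ab]; first by rewrite Rabs_R0; lra.
by apply: Rle_trans (Rabs_triang _ _) _; lra.
Qed.

End FiniteSums.

Section Norms.
Variable d : nat.
Implicit Types u v : vec d.

Definition vnorm1 u : R := vsum (fun i => Rabs (u i)).
Definition mnorm1 (L : mat d) : R := vsum (fun i => vsum (fun j => Rabs (L i j))).

Lemma vnorm1_ge0 u : 0 <= vnorm1 u.
Proof. by apply: vsum_ge0 => i; apply: Rabs_pos. Qed.

Lemma Rabs_le_vnorm1 u i : Rabs (u i) <= vnorm1 u.
Proof. by apply: vsum_ge_term => j; apply: Rabs_pos. Qed.

Lemma vnorm1_add u v : vnorm1 (vadd u v) <= vnorm1 u + vnorm1 v.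
Proof. by rewrite /vnorm1 -vsum_add; apply: vsum_le => i; apply: Rabs_triang. Qed.

Lemma vnorm1_scal c u : vnorm1 (vscal c u) = Rabs c * vnorm1 u.
Proof. by rewrite /vnorm1 -vsum_scal; apply: vsum_ext => i; apply: Rabs_mult. Qed.

Lemma vnorm_ge0 u : 0 <= vnorm u.
Proof. exact: sqrt_pos. Qed.

Lemma Rabs_le_vnorm u i : Rabs (u i) <= vnorm u.
Proof.
rewrite /vnorm -sqrt_Rsqr_abs; apply: sqrt_le_1_alt; rewrite /Rsqr.
by apply: (@vsum_ge_term _ (fun j => u j * u j)) => j; apply: Rle_0_sqr.
Qed.

Lemma vnorm_le_vnorm1 u : vnorm u <= vnorm1 u.
Proof.
rewrite /vnorm -(sqrt_Rsqr (vnorm1 u)); last exact: vnorm1_ge0.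
apply: sqrt_le_1_alt; rewrite /Rsqr [X in _ <= X * _]/vnorm1 Rmult_comm -vsum_scal.
apply: vsum_le => i; rewrite -[u i * u i]Rabs_pos_eq ?Rabs_mult; last exact: Rle_0_sqr.
by rewrite Rmult_comm; apply: Rmult_le_compat_l; [apply: Rabs_pos | apply: Rabs_le_vnorm1].
Qed.

Lemma vnorm1_le_vnorm u : vnorm1 u <= INR d * vnorm u.
Proof.
rewrite -vsum_const1 Rmult_comm -vsum_scal; apply: vsum_le => i.
by rewrite Rmult_1_r; apply: Rabs_le_vnorm.
Qed.

Lemma vnorm_eq0 u : vnorm u = 0 -> u = @vzero d.
Proof.
move=> u0; apply: funext => i; have := Rabs_le_vnorm u i.
by rewrite u0 /vzero; split_Rabs; lra.
Qed.

Lemma Rabs_dot_le u v : Rabs (dot u v) <= vnorm1 u * vnorm1 v.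
Proof.
apply: Rle_trans (Rabs_vsum _) _; rewrite [X in _ <= X * _]/vnorm1 Rmult_comm -vsum_scal.
apply: vsum_le => i; rewrite Rabs_mult Rmult_comm.
by apply: Rmult_le_compat_r; [apply: Rabs_pos | apply: Rabs_le_vnorm1].
Qed.

Lemma vnorm1_mapply_le (L : mat d) u : vnorm1 (mapply L u) <= mnorm1 L * vnorm1 u.
Proof.
rewrite /mnorm1 Rmult_comm -vsum_scal; apply: vsum_le => i.
apply: Rle_trans (Rabs_vsum _) _; rewrite -vsum_scal; apply: vsum_le => j.
rewrite Rabs_mult [X in _ <= X]Rmult_comm.
by apply: Rmult_le_compat_l; [apply: Rabs_pos | apply: Rabs_le_vnorm1].
Qed.

Lemma mnorm1_ge0 (L : mat d) : 0 <= mnorm1 L.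
Proof. by apply: vsum_ge0 => i; apply: vsum_ge0 => j; apply: Rabs_pos. Qed.

Lemma dot_add u a b : dot u (vadd a b) = dot u a + dot u b.
Proof. by rewrite /dot -vsum_add; apply: vsum_ext => i; rewrite /vadd; ring. Qed.

Lemma dot_sub u a b : dot u (vsub a b) = dot u a - dot u b.
Proof. by rewrite /dot -vsum_sub; apply: vsum_ext => i; rewrite /vsub; ring. Qed.

Lemma dot_scal u c a : dot u (vscal c a) = c * dot u a.
Proof. by rewrite /dot -vsum_scal; apply: vsum_ext => i; rewrite /vscal; ring. Qed.

Lemma dot0 u : dot u (@vzero d) = 0.
Proof. by apply: big1 => i _; rewrite /vzero Rmult_0_r. Qed.

Lemma mapply_sub (L : mat d) a b : mapply L (vsub a b) = vsub (mapply L a) (mapply L b).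
Proof. by apply: funext => i; rewrite /mapply /vsub -vsum_sub; apply: vsum_ext => j; ring. Qed.

Lemma mapply_scal (L : mat d) c a : mapply L (vscal c a) = vscal c (mapply L a).
Proof. by apply: funext => i; rewrite /mapply /vscal -vsum_scal; apply: vsum_ext => j; ring. Qed.

End Norms.

Lemma Rmult_div_succ_lt e a : 0 < e -> 0 <= a -> a * (e / (a + 1)) < e.
Proof.
move=> e0 a0; have -> : a * (e / (a + 1)) = e - e / (a + 1) by field; lra.
suff : 0 < e / (a + 1) by lra.
by apply: Rdiv_lt_0_compat; lra.
Qed.

Lemma div_succ_gt0 e a : 0 < e -> 0 <= a -> 0 < e / (a + 1).
Proof. by move=> e0 a0; apply: Rdiv_lt_0_compat; lra. Qed.

Section VectorDerivative.
Variable d : nat.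

Definition vderiv (c : R -> vec d) (v : vec d) (t : R) : Prop :=
  forall eps, 0 < eps -> exists delta, 0 < delta /\
    forall h, h <> 0 -> Rabs h < delta -> 0 <= t + h <= 1 ->
      vnorm1 (vsub (vsub (c (t + h)) (c t)) (vscal h v)) <= eps * Rabs h.

Lemma delta_forall_ord (P : 'I_d -> R -> Prop) :
  (forall i a b, 0 < a <= b -> P i b -> P i a) ->
  (forall i, exists delta, 0 < delta /\ P i delta) ->
  exists delta, 0 < delta /\ forall i, P i delta.
Proof.
move=> Pmono Pex.
suff [delta [delta0 Hs]] : exists delta, 0 < delta /\ forall i, i \in enum 'I_d -> P i delta.
  by exists delta; split => // i; apply: Hs; rewrite mem_enum.
elim: (enum 'I_d) => [|a s [dl [dl0 Hs]]]; first by exists 1; split => //; lra.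
have [da [da0 Ha]] := Pex a.
have dmin0 : 0 < Rmin dl da by apply: Rmin_pos.
exists (Rmin dl da); split => // i; rewrite inE => /orP [/eqP -> | i_s].
  by apply: (Pmono a _ da) => //; split => //; apply: Rmin_r.
by apply: (Pmono i _ dl); [split => //; apply: Rmin_l | apply: Hs].
Qed.

Lemma vderiv_of_deriv01 (c : R -> vec d) v t :
  (forall i, deriv01 (fun s => c s i) (v i) t) -> vderiv c v t.
Proof.
move=> dc eps eps0.
have d0 := pos_INR d.
set e := eps / (INR d + 1).
have e0 : 0 < e by apply: div_succ_gt0.
pose P i dl := forall h, h <> 0 -> Rabs h < dl -> 0 <= t + h <= 1 ->
  Rabs ((c (t + h) i - c t i) / h - v i) < e.
have Pmono : forall i a b, 0 < a <= b -> P i b -> P i a.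
  by move=> i a b [a0 ab] Pb h h0 ha ht; apply: Pb => //; lra.
have [dl [dl0 Hdl]] := delta_forall_ord Pmono (fun i => dc i e e0).
exists dl; split => // h h0 hdl ht.
apply: (@Rle_trans _ (vsum (fun _ : 'I_d => e * Rabs h))).
  apply: vsum_le => i; rewrite /vsub /vscal.
  have -> : c (t + h) i - c t i - h * v i = h * ((c (t + h) i - c t i) / h - v i) by field.
  rewrite Rabs_mult Rmult_comm; apply: Rmult_le_compat_r; first exact: Rabs_pos.
  by left; apply: Hdl.
have -> : vsum (fun _ : 'I_d => e * Rabs h) = e * Rabs h * INR d.
  by rewrite -vsum_const1 -vsum_scal; apply: vsum_ext => _; ring.
have := Rmult_div_succ_lt eps0 d0; have := Rabs_pos h; rewrite -/e; nra.
Qed.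

Lemma deriv01_dot (u : vec d) c v t :
  vderiv c v t -> deriv01 (fun s => dot u (c s)) (dot u v) t.
Proof.
move=> dc eps eps0.
have u0 := vnorm1_ge0 u.
have [dl [dl0 Hdl]] := dc _ (div_succ_gt0 eps0 u0).
exists dl; split => // h h0 hdl ht.
have -> : (dot u (c (t + h)) - dot u (c t)) / h - dot u v =
          dot u (vsub (vsub (c (t + h)) (c t)) (vscal h v)) / h.
  by rewrite !dot_sub dot_scal; field.
have h0' : 0 < Rabs h by apply: Rabs_pos_lt.
rewrite /Rdiv Rabs_mult Rabs_inv.
apply: Rle_lt_trans (Rmult_div_succ_lt eps0 u0).
apply: (@Rle_trans _ (vnorm1 u * (eps / (vnorm1 u + 1) * Rabs h) * / Rabs h)); last first.
  by right; field; lra.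
apply: Rmult_le_compat_r; first by left; apply: Rinv_0_lt_compat.
apply: Rle_trans (Rabs_dot_le _ _) _.
by apply: Rmult_le_compat_l => //; apply: Hdl.
Qed.

Lemma vderiv_lipschitz c v t : vderiv c v t -> exists delta, 0 < delta /\
  forall h, h <> 0 -> Rabs h < delta -> 0 <= t + h <= 1 ->
    vnorm1 (vsub (c (t + h)) (c t)) <= (vnorm1 v + 1) * Rabs h.
Proof.
move=> dc; have [dl [dl0 Hdl]] := dc 1 Rlt_0_1.
exists dl; split => // h h0 hdl ht.
have -> : vsub (c (t + h)) (c t) = vadd (vsub (vsub (c (t + h)) (c t)) (vscal h v)) (vscal h v).
  by apply: funext => i; rewrite /vadd /vsub /vscal; ring.
apply: Rle_trans (vnorm1_add _ _) _; rewrite vnorm1_scal.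
by have := Hdl h h0 hdl ht; lra.
Qed.

Lemma frechet_deriv_vnorm1 (F : vec d -> vec d) (L : mat d) x : frechet_deriv F L x ->
  forall eps, 0 < eps -> exists delta, 0 < delta /\ forall D, vnorm1 D < delta ->
    vnorm1 (vsub (vsub (F (vadd x D)) (F x)) (mapply L D)) <= eps * vnorm1 D.
Proof.
move=> dF eps eps0; have d0 := pos_INR d.
have [dl [dl0 Hdl]] := dF _ (div_succ_gt0 eps0 d0).
exists dl; split => // D D_lt.
have D_le := vnorm_le_vnorm1 D.
apply: Rle_trans (vnorm1_le_vnorm _) _.
apply: (@Rle_trans _ (INR d * (eps / (INR d + 1) * vnorm1 D))).
  apply: Rmult_le_compat_l => //; apply: Rle_trans (Hdl D ltac:(lra)) _.
  by apply: Rmult_le_compat_l => //; left; apply: div_succ_gt0.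
rewrite -Rmult_assoc; apply: Rmult_le_compat_r; first exact: vnorm1_ge0.
by left; apply: Rmult_div_succ_lt.
Qed.

(* Split F (c (t + h)) - F (c t) - h L v into the remainder of F at c t along the increment
   D := c (t + h) - c t, which is O(|D|) = O(|h|), plus L applied to the remainder D - h v of c. *)
Lemma vderiv_comp (F : vec d -> vec d) (L : mat d) c v t :
  vderiv c v t -> frechet_deriv F L (c t) -> vderiv (fun s => F (c s)) (mapply L v) t.
Proof.
move=> dc dF eps eps0.
have L0 := mnorm1_ge0 L; have e0 : 0 < eps / 2 by lra.
set A := vnorm1 v + 1; have A0 : 0 < A by have := vnorm1_ge0 v; rewrite /A; lra.
have [dlA [dlA0 HA]] := vderiv_lipschitz dc.
have [dlc [dlc0 Hc]] := dc _ (div_succ_gt0 e0 L0).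
have [dlF [dlF0 HF]] := frechet_deriv_vnorm1 dF (Rdiv_lt_0_compat _ _ e0 A0).
have dlFA0 : 0 < dlF / A by apply: Rdiv_lt_0_compat.
exists (Rmin dlA (Rmin dlc (dlF / A))); split; first by repeat apply: Rmin_pos.
move=> h h0 hdl ht.
have := Rmin_l dlA (Rmin dlc (dlF / A)); have := Rmin_r dlA (Rmin dlc (dlF / A)).
have := Rmin_l dlc (dlF / A); have := Rmin_r dlc (dlF / A) => *.
set D := vsub (c (t + h)) (c t).
have h_pos := Rabs_pos h.
have D_le : vnorm1 D <= A * Rabs h by apply: HA => //; lra.
have D_lt : vnorm1 D < dlF.
  apply: Rle_lt_trans D_le _; have -> : dlF = A * (dlF / A) by field; lra.
  by apply: Rmult_lt_compat_l => //; lra.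
have -> : vsub (vsub (F (c (t + h))) (F (c t))) (vscal h (mapply L v)) =
   vadd (vsub (vsub (F (vadd (c t) D)) (F (c t))) (mapply L D)) (mapply L (vsub D (vscal h v))).
  have -> : c (t + h) = vadd (c t) D by apply: funext => i; rewrite /vadd /D /vsub; ring.
  rewrite mapply_sub mapply_scal; apply: funext => i.
  by rewrite /vadd /vsub /vscal; ring.
apply: Rle_trans (vnorm1_add _ _) _.
have F_le : vnorm1 (vsub (vsub (F (vadd (c t) D)) (F (c t))) (mapply L D)) <= eps / 2 * Rabs h.
  apply: Rle_trans (HF D D_lt) _.
  have -> : eps / 2 * Rabs h = eps / 2 / A * (A * Rabs h) by field; lra.
  by apply: Rmult_le_compat_l => //; left; apply: Rdiv_lt_0_compat.
have L_le : vnorm1 (mapply L (vsub D (vscal h v))) <= eps / 2 * Rabs h.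
  apply: Rle_trans (vnorm1_mapply_le _ _) _.
  have := Rmult_div_succ_lt e0 L0; have := Hc h h0 ltac:(lra) ht.
  rewrite -/D; nra.
lra.
Qed.

End VectorDerivative.

Definition clamp01 t := Rmax 0 (Rmin 1 t).

Lemma clamp01_in t : 0 <= clamp01 t <= 1.
Proof. by rewrite /clamp01 /Rmax /Rmin; repeat case: Rle_dec => /=; lra. Qed.

Lemma clamp01_id t : 0 <= t <= 1 -> clamp01 t = t.
Proof. by rewrite /clamp01 /Rmax /Rmin; repeat case: Rle_dec => /=; lra. Qed.

Lemma clamp01_dist t c : 0 <= c <= 1 -> Rabs (clamp01 t - c) <= Rabs (t - c).
Proof. by rewrite /clamp01 /Rmax /Rmin; repeat case: Rle_dec => /=; split_Rabs; lra. Qed.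

Lemma deriv01_lipschitz f l t : deriv01 f l t -> exists delta, 0 < delta /\
  forall h, Rabs h < delta -> 0 <= t + h <= 1 -> Rabs (f (t + h) - f t) <= (Rabs l + 1) * Rabs h.
Proof.
move=> df; have [dl [dl0 Hdl]] := df 1 Rlt_0_1.
exists dl; split => // h hdl ht.
have [->|h0] := Req_dec h 0; first by rewrite Rplus_0_r Rminus_diag Rabs_R0 Rmult_0_r; lra.
have -> : f (t + h) - f t = h * ((f (t + h) - f t) / h - l) + h * l by field.
apply: Rle_trans (Rabs_triang _ _) _; rewrite !Rabs_mult.
have := Rmult_le_compat_l (Rabs h) _ _ (Rabs_pos h) (Rlt_le _ _ (Hdl h h0 hdl ht)); lra.
Qed.

(* Stdlib's MVT needs a function continuous at both endpoints: extend f constantly outside [0,1]. *)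
Lemma deriv01_MVT f f' : (forall t, 0 <= t <= 1 -> deriv01 f (f' t) t) ->
  exists c, 0 <= c <= 1 /\ f 1 - f 0 = f' c.
Proof.
move=> df; pose g t := f (clamp01 t).
have dg : forall c, 0 < c < 1 -> derivable_pt_lim g c (f' c).
  move=> c hc eps eps0; have [dl [dl0 Hdl]] := df c ltac:(lra) eps eps0.
  have r0 : 0 < Rmin dl (Rmin c (1 - c)) by repeat apply: Rmin_pos; lra.
  exists (mkposreal _ r0) => h h0 /= hr.
  have := Rmin_l dl (Rmin c (1 - c)); have := Rmin_r dl (Rmin c (1 - c)).
  have := Rmin_l c (1 - c); have := Rmin_r c (1 - c) => *.
  have ht : 0 <= c + h <= 1 by move: hr; split_Rabs; lra.
  by rewrite /g !clamp01_id //; [apply: Hdl => //; lra | lra].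
have cg : forall c, 0 <= c <= 1 -> continuity_pt g c.
  move=> c hc eps eps0; have [dl [dl0 Hdl]] := deriv01_lipschitz (df c hc).
  set l := Rabs (f' c) + 1 in Hdl.
  have l0 : 0 < l by have := Rabs_pos (f' c); rewrite /l; lra.
  exists (Rmin dl (eps / l)); split; first by apply: Rmin_pos => //; apply: Rdiv_lt_0_compat.
  move=> x [_ hx]; rewrite /R_dist /= /R_dist in hx *.
  have hx1 : Rabs (x - c) < dl by apply: Rlt_le_trans hx (Rmin_l _ _).
  have hx2 : Rabs (x - c) < eps / l by apply: Rlt_le_trans hx (Rmin_r _ _).
  have hcl := clamp01_dist x hc.
  have := Hdl (clamp01 x - c) ltac:(lra).
  rewrite Rplus_minus /g (clamp01_id hc) => /(_ (clamp01_in x)) Hl.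
  apply: Rle_lt_trans Hl _.
  have -> : eps = l * (eps / l) by field; lra.
  by apply: Rmult_lt_compat_l => //; lra.
pose pr1 c (hc : 0 < c < 1) := exist (fun l => derivable_pt_abs g c l) (f' c) (dg c hc).
pose pr2 c (_ : 0 < c < 1) := derivable_pt_id c.
have [c [hc E]] := MVT g id 0 1 pr1 pr2 Rlt_0_1 cg
  (fun c _ => derivable_continuous_pt _ _ (derivable_pt_id c)).
exists c; split; first lra.
move: E; rewrite (derive_pt_eq_0 _ _ _ _ (dg c hc)).
rewrite (derive_pt_eq_0 _ _ _ _ (derivable_pt_lim_id c)).
by rewrite /g !clamp01_id /id; lra.
Qed.

Lemma deriv01_lincomb f g a b p q t : deriv01 f a t -> deriv01 g b t ->
  deriv01 (fun s => p * f s + q * g s) (p * a + q * b) t.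
Proof.
move=> df dg eps eps0.
have p0 := Rabs_pos p; have q0 := Rabs_pos q.
have e0 : 0 < eps / 2 by lra.
have [df1 [df0 Hf]] := df _ (div_succ_gt0 e0 p0).
have [dg1 [dg0 Hg]] := dg _ (div_succ_gt0 e0 q0).
exists (Rmin df1 dg1); split; first exact: Rmin_pos.
move=> h h0 hdl ht.
have {}Hf := Hf h h0 (Rlt_le_trans _ _ _ hdl (Rmin_l _ _)) ht.
have {}Hg := Hg h h0 (Rlt_le_trans _ _ _ hdl (Rmin_r _ _)) ht.
have -> : (p * f (t + h) + q * g (t + h) - (p * f t + q * g t)) / h - (p * a + q * b)
  = p * ((f (t + h) - f t) / h - a) + q * ((g (t + h) - g t) / h - b) by field.
apply: Rle_lt_trans (Rabs_triang _ _) _; rewrite !Rabs_mult.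
have := Rmult_div_succ_lt e0 p0; have := Rmult_div_succ_lt e0 q0.
have := Rmult_le_compat_l _ _ _ p0 (Rlt_le _ _ Hf).
have := Rmult_le_compat_l _ _ _ q0 (Rlt_le _ _ Hg).
lra.
Qed.

Lemma deriv01_cauchy_MVT f g f' g' :
  (forall t, 0 <= t <= 1 -> deriv01 f (f' t) t) ->
  (forall t, 0 <= t <= 1 -> deriv01 g (g' t) t) ->
  exists c, 0 <= c <= 1 /\ (g 1 - g 0) * f' c = (f 1 - f 0) * g' c.
Proof.
move=> df dg.
have [c [hc E]] := @deriv01_MVT (fun s => (g 1 - g 0) * f s + - (f 1 - f 0) * g s)
  (fun t => (g 1 - g 0) * f' t + - (f 1 - f 0) * g' t)
  (fun t ht => deriv01_lincomb _ _ (df t ht) (dg t ht)).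
by exists c; split => //; lra.
Qed.

Section PeriodicBound.
Variable d : nat.

Definition sup_continuous (g : vec d -> R) : Prop :=
  forall x eps, 0 < eps -> exists delta, 0 < delta /\
    forall y, (forall i, Rabs (y i - x i) < delta) -> Rabs (g y - g x) < eps.

Lemma sup_continuous_dot (u : vec d) (G : vec d -> vec d) :
  vcontinuous G -> sup_continuous (fun z => dot u (G z)).
Proof.
move=> cG z eps eps0.
have d0 := pos_INR d.
have ud0 : 0 <= vnorm1 u * INR d by apply: Rmult_le_pos => //; apply: vnorm1_ge0.
have [dl [dl0 Hdl]] := cG z _ (div_succ_gt0 eps0 ud0).
exists (dl / (INR d + 1)); split; first exact: div_succ_gt0.
move=> y hy.
have yz : vnorm (vsub y z) < dl.
  apply: Rle_lt_trans (vnorm_le_vnorm1 _) _.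
  apply: (@Rle_lt_trans _ (INR d * (dl / (INR d + 1)))); last exact: Rmult_div_succ_lt.
  rewrite -{1}vsum_const1 Rmult_comm -vsum_scal; apply: vsum_le => i.
  by rewrite Rmult_1_r /vsub; left; apply: hy.
rewrite /= -dot_sub; apply: Rle_lt_trans (Rabs_dot_le _ _) _.
apply: Rle_lt_trans (Rmult_div_succ_lt eps0 ud0).
rewrite Rmult_assoc; apply: Rmult_le_compat_l; first exact: vnorm1_ge0.
apply: Rle_trans (vnorm1_le_vnorm _) _.
by apply: Rmult_le_compat_l => //; left; apply: Hdl.
Qed.

Lemma sup_continuous_bounded_cube (g : vec d -> R) : sup_continuous g ->
  exists C, forall x, (forall i, 0 <= x i <= 1) -> Rabs (g x) <= C.
Proof.
move=> cg; pose psi (v : 'rV[R]_d) : R^o := g (fun i => v ord0 i).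
have cpsi : continuous psi.
  move=> v A /= /nbhs_ballP [e /RltP e0 He].
  have [dl [dl0 Hdl]] := cg (fun i => v ord0 i) e e0.
  apply/nbhs_ballP; exists dl => /=; first exact/RltP.
  move=> u [_ uv]; apply: He; rewrite /ball /=; apply/RltP.
  change (Rabs (psi v - psi u) < e); rewrite -Rabs_Ropp Ropp_minus_distr; apply: Hdl => i.
  by move: (uv ord0 i); rewrite /ball /= => /RltP; rewrite -Rabs_Ropp Ropp_minus_distr.
have cube := @rV_compact R d (fun _ => `[(0:R)%R, (1:R)%R]%classic)
  (fun _ => @segment_compact R _ _).
have [C [_ HC]] := compact_bounded (continuous_compact (continuous_subspaceT cpsi) cube).
have C1 : C < Rmax C 0 + 1 by have := Rmax_l C 0; lra.
have {}C1 : (C < Rmax C 0 + 1)%R by apply/RltP.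
exists (Rmax C 0 + 1) => x hx.
have x_cube : forall i, `[(0:R)%R, (1:R)%R]%classic ((\row_j x j)%R ord0 i).
  move=> i; have [x0 x1] := hx i.
  by rewrite /= mxE in_itv /=; apply/andP; split; apply/RleP.
have := HC _ C1 (psi (\row_j x j)%R) (ex_intro2 _ _ (\row_j x j)%R x_cube erefl).
rewrite /psi; have -> : (fun i => (\row_j x j)%R ord0 i) = x by apply: funext => i; rewrite mxE.
by move/RleP.
Qed.

Lemma sup_continuous_periodic_bounded (g : vec d -> R) : sup_continuous g ->
  (forall x (n : 'I_d -> Z), g (vadd x (zvec n)) = g x) ->
  exists C, forall x, Rabs (g x) <= C.
Proof.
move=> cg gper; have [C HC] := sup_continuous_bounded_cube cg.
exists C => x; pose n i := Int_part (x i).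
have -> : x = vadd (vsub x (zvec n)) (zvec n) by apply: funext => i; rewrite /vadd /vsub; ring.
rewrite gper; apply: HC => i; rewrite /vsub /zvec /n.
by have := base_Int_part (x i); lra.
Qed.

End PeriodicBound.

Lemma geometric_unbounded (u : nat -> R) K c : 1 < K -> 0 < c ->
  (forall n, K ^ n * c <= u n) -> forall b, exists N, b < u N.
Proof.
move=> K1 c0 Ku b.
have [N HN] := Pow_x_infinity K ltac:(rewrite Rabs_pos_eq; lra) ((Rabs b + 1) / c).
have := HN N (Nat.le_refl N); rewrite -RPow_abs Rabs_pos_eq; last lra.
move=> KN; exists N; apply: Rlt_le_trans (Ku N).
have := Rmult_le_compat_r c _ _ (Rlt_le _ _ c0) (Rge_le _ _ KN).
have -> : (Rabs b + 1) / c * c = Rabs b + 1 by field; lra.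
by have := Rle_abs b; lra.
Qed.

Lemma Un_cv_scal (u : nat -> R) c l : Un_cv u l -> Un_cv (fun n => c * u n) (c * l).
Proof.
apply: CV_mult => e e0; exists 0%nat => n _.
by rewrite /R_dist Rminus_diag Rabs_R0.
Qed.

(* Above the fixed point E / (|q| - 1) of the affine bound, |D n| grows like |q| ^ n. *)
Lemma affine_expanding_not_cv0 (D : nat -> R) q E : 1 < Rabs q -> 0 <= E ->
  (forall n, Rabs q * Rabs (D n) - E <= Rabs (D n.+1)) ->
  (forall b, exists N, b < Rabs (D N)) ->
  ~ Un_cv (fun n => D n / q ^ n) 0.
Proof.
move=> q1 E0 Dstep Dunb cv0.
set r := Rabs q in q1 Dstep; set B := E / (r - 1).
have B_step : forall n, r * (Rabs (D n) - B) <= Rabs (D n.+1) - B.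
  move=> n; have := Dstep n; have : r * B - B = E by rewrite /B; field; lra.
  lra.
have [N DN] := Dunb B; set rho := Rabs (D N) - B.
have rho0 : 0 < rho by rewrite /rho; lra.
have Dgrow : forall j, r ^ j * rho <= Rabs (D (N + j)%nat) - B.
  elim=> [|j IH]; first by rewrite addn0 /= /rho; lra.
  rewrite addnS /=; apply: Rle_trans (B_step _).
  by rewrite Rmult_assoc; apply: Rmult_le_compat_l; lra.
have rN := pow_lt r N ltac:(lra).
have [N0 HN0] := cv0 (rho / r ^ N) (Rdiv_lt_0_compat _ _ rho0 rN).
have := HN0 (N + N0)%nat ltac:(apply/leP; exact: leq_addl).
have rN0 := pow_lt r N0 ltac:(lra).
have B0 : 0 <= B by apply: Rmult_le_pos => //; left; apply: Rinv_0_lt_compat; lra.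
rewrite /R_dist Rminus_0_r /Rdiv Rabs_mult Rabs_inv -RPow_abs pow_add -/r => Hlt.
have DN0 : r ^ N0 * rho <= Rabs (D (N + N0)%nat) by have := Dgrow N0; lra.
have rNN0 : 0 < / (r ^ N * r ^ N0) by apply: Rinv_0_lt_compat; nra.
have := Rmult_le_compat_r _ _ _ (Rlt_le _ _ rNN0) DN0.
have -> : r ^ N0 * rho * / (r ^ N * r ^ N0) = rho / r ^ N by field; lra.
lra.
Qed.

Section LeftEigenvector.
Variables (d : nat) (M : 'I_d -> 'I_d -> Z) (G : vec d -> vec d) (m : Z) (vL : 'I_d -> Z).

Definition orbit_gap (x y : vec d) (n : nat) : R :=
  dot (zvec vL) (iter n (hatF M G) y) - dot (zvec vL) (iter n (hatF M G) x).

Lemma Phi_seq_orbit_gap_cv0 k x y x0 : k <> 0 -> IZR m <> 0 ->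
  Un_cv (Phi_seq M G m vL k x) x0 -> Un_cv (Phi_seq M G m vL k y) x0 ->
  Un_cv (fun n => orbit_gap x y n / IZR m ^ n) 0.
Proof.
move=> k0 m0 cvx cvy.
have := Un_cv_scal k (CV_minus _ _ _ _ cvy cvx); rewrite Rminus_diag Rmult_0_r.
apply: Un_cv_ext => n; rewrite /Phi_seq /orbit_gap; field.
by split => //; apply: pow_nonzero.
Qed.

Hypothesis vL_eig : forall j, vsum (fun i => IZR (vL i) * IZR (M i j)) = IZR m * IZR (vL j).

Lemma dot_hatF z :
  dot (zvec vL) (hatF M G z) = IZR m * dot (zvec vL) z + dot (zvec vL) (G z).
Proof.
rewrite /hatF dot_add; congr (_ + _).
rewrite /dot /mapply /zmat /zvec -vsum_scal.
transitivity (vsum (fun i => vsum (fun j => IZR (vL i) * IZR (M i j) * z j))).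
  by apply: vsum_ext => i; rewrite -vsum_scal; apply: vsum_ext => j; ring.
rewrite vsum_exch; apply: vsum_ext => j.
transitivity (z j * vsum (fun i => IZR (vL i) * IZR (M i j))); last by rewrite vL_eig; ring.
by rewrite -vsum_scal; apply: vsum_ext => i; ring.
Qed.

Lemma orbit_gap_step C x y n : (forall z, Rabs (dot (zvec vL) (G z)) <= C) ->
  Rabs (IZR m) * Rabs (orbit_gap x y n) - 2 * C <= Rabs (orbit_gap x y n.+1).
Proof.
move=> GC.
have -> : orbit_gap x y n.+1 = IZR m * orbit_gap x y n +
    (dot (zvec vL) (G (iter n (hatF M G) y)) - dot (zvec vL) (G (iter n (hatF M G) x))).
  by rewrite /orbit_gap /= !dot_hatF; ring.
have := GC (iter n (hatF M G) y); have := GC (iter n (hatF M G) x).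
by rewrite -Rabs_mult; split_Rabs; lra.
Qed.

End LeftEigenvector.

Section HorizontalCurves.
Variables (d : nat) (lv w : vec d) (alpha : R).

Definition horizontal (c : R -> vec d) : Prop :=
  exists v : R -> vec d, forall t, 0 <= t <= 1 ->
    vderiv c (v t) t /\ in_open_cone lv w alpha (v t).

Definition displacement (c : R -> vec d) : R := dot lv (c 1) - dot lv (c 0).

Lemma open_cone_a_neq0 v : in_open_cone lv w alpha v -> cone_a lv w v <> 0.
Proof.
rewrite /in_open_cone => v_cone a0; move: v_cone; rewrite a0 Rabs_R0 Rmult_0_r.
by have := vnorm_ge0 (cone_b lv w v); lra.
Qed.

Lemma open_cone_neq0 v : in_open_cone lv w alpha v -> v <> @vzero d.
Proof.
move=> /open_cone_a_neq0 a0 v0; apply: a0.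
by rewrite v0 /cone_a dot0 /Rdiv Rmult_0_l.
Qed.

Hypothesis lw0 : dot lv w <> 0.

Lemma dot_cone_a v : dot lv v = dot lv w * cone_a lv w v.
Proof. by rewrite /cone_a; field. Qed.

(* vL is transverse to every direction of the open cone. *)
Lemma horizontal_displacement_neq0 c : horizontal c -> displacement c <> 0.
Proof.
case=> v hv; rewrite /displacement.
have [t [ht ->]] := @deriv01_MVT (fun s => dot lv (c s)) (fun t => dot lv (v t))
  (fun t ht => deriv01_dot lv (hv t ht).1).
rewrite dot_cone_a; apply: Rmult_integral_contrapositive_currified => //.
exact: open_cone_a_neq0 (hv t ht).2.
Qed.

Variables (F : vec d -> vec d) (DF : vec d -> mat d) (K : R).
Hypothesis F_deriv : forall x, frechet_deriv F (DF x) x.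
Hypothesis DF_cone : forall z v, v <> @vzero d -> in_cone lv w alpha v ->
  in_open_cone lv w alpha (mapply (DF z) v) /\
  K * Rabs (cone_a lv w v) < Rabs (cone_a lv w (mapply (DF z) v)).

Lemma horizontal_comp c : horizontal c -> horizontal (fun s => F (c s)).
Proof.
case=> v hv; exists (fun t => mapply (DF (c t)) (v t)) => t ht.
have [dv ov] := hv t ht.
split; first exact: vderiv_comp dv (F_deriv _).
by have [] := DF_cone (c t) (open_cone_neq0 ov) (Rlt_le _ _ ov).
Qed.

Lemma horizontal_iter n c : horizontal c -> horizontal (fun s => iter n F (c s)).
Proof. by move=> hc; elim: n => // n /horizontal_comp. Qed.

(* Cauchy's mean value theorem compares the displacements of c and F o c at a single time t,
   where the derivatives are v t and DF (c t) (v t). *)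
Lemma horizontal_displacement_expand c : horizontal c ->
  K * Rabs (displacement c) <= Rabs (displacement (fun s => F (c s))).
Proof.
case=> v hv; pose v' t := mapply (DF (c t)) (v t).
have [t [ht E]] := @deriv01_cauchy_MVT (fun s => dot lv (c s)) (fun s => dot lv (F (c s)))
  (fun t => dot lv (v t)) (fun t => dot lv (v' t))
  (fun t ht => deriv01_dot lv (hv t ht).1)
  (fun t ht => deriv01_dot lv (vderiv_comp (hv t ht).1 (F_deriv _))).
have [_ ov] := hv t ht.
have [_ a_expand] := DF_cone (c t) (open_cone_neq0 ov) (Rlt_le _ _ ov).
have a0 : 0 < Rabs (cone_a lv w (v t)) by apply: Rabs_pos_lt; apply: open_cone_a_neq0.
rewrite (dot_cone_a (v t)) (dot_cone_a (v' t)) in E.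
have {}E : Rabs (displacement (fun s => F (c s))) * Rabs (cone_a lv w (v t)) =
           Rabs (displacement c) * Rabs (cone_a lv w (v' t)).
  rewrite -!Rabs_mult; congr Rabs; apply: (Rmult_eq_reg_l (dot lv w)) => //.
  by rewrite /displacement; lra.
apply: (Rmult_le_reg_r _ _ _ a0); rewrite E.
by have := Rabs_pos (displacement c); rewrite -/(v' t) in a_expand; nra.
Qed.

Lemma horizontal_iter_displacement n c : 0 <= K -> horizontal c ->
  K ^ n * Rabs (displacement c) <= Rabs (displacement (fun s => iter n F (c s))).
Proof.
move=> K0 hc; elim: n => [|n IH]; first by rewrite Rmult_1_l; apply: Rle_refl.
apply: Rle_trans (horizontal_displacement_expand (horizontal_iter n hc)).
by rewrite /= Rmult_assoc; apply: Rmult_le_compat_l.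
Qed.

End HorizontalCurves.

Unset Implicit Arguments.

Theorem mainTheorem5 (d : nat) (M : 'I_d -> 'I_d -> Z) (G : vec d -> vec d)
  (DF : vec d -> mat d) (m : Z) (vR : vec d) (vL : 'I_d -> Z) (K alpha k : R)
  (hG_cont : vcontinuous G)
  (hG_per : forall (x : vec d) (n : 'I_d -> Z), G (vadd x (zvec n)) = G x)
  (hDF : forall x, frechet_deriv (hatF M G) (DF x) x)
  (hDF_cont : mcontinuous DF)
  (hDF_inv : forall x, exists N : mat d, mmul N (DF x) = @idm d /\ mmul (DF x) N = @idm d)
  (hm : 1 < Rabs (IZR m))
  (hvR : vR <> @vzero d)
  (hvR_eig : mapply (zmat M) vR = vscal (IZR m) vR)
  (hvL : zvec vL <> @vzero d)
  (hvL_eig : forall j, vsum (fun i => IZR (vL i) * IZR (M i j)) = IZR m * IZR (vL j))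
  (* R^d = span(w) (+) W, needed for the decomposition v = a w + b *)
  (hdec : dot (zvec vL) vR <> 0)
  (* (K,alpha)-cone system w.r.t. w = vR/|vR| and W = vL^perp *)
  (hcone : cone_system DF (vscal (/ vnorm vR) vR) (zvec vL) K alpha)
  (* k = min { |vL . x| : x in Z^d, vL . x <> 0 } *)
  (hk_att : exists n : 'I_d -> Z, dot (zvec vL) (zvec n) <> 0 /\ Rabs (dot (zvec vL) (zvec n)) = k)
  (hk_min : forall n : 'I_d -> Z, dot (zvec vL) (zvec n) <> 0 -> k <= Rabs (dot (zvec vL) (zvec n))) :
  forall (x0 : R) (x y : vec d),
    Un_cv (Phi_seq M G m vL k x) x0 ->
    Un_cv (Phi_seq M G m vL k y) x0 ->
    x <> y ->
    ~ joined_by_horizontal_curve (zvec vL) (vscal (/ vnorm vR) vR) alpha x y.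
Proof.
move=> x0 x y cvx cvy _ [gamma [gamma' [gamma0 [gamma1 Hgamma]]]].
have [K1 [_ hcone_z]] := hcone.
set w := vscal (/ vnorm vR) vR in Hgamma hcone_z; set lv := zvec vL in Hgamma hcone_z.
have lw0 : dot lv w <> 0.
  rewrite /w dot_scal; apply: Rmult_integral_contrapositive_currified => //.
  by apply: Rinv_neq_0_compat => /vnorm_eq0.
have gamma_hor : horizontal lv w alpha gamma.
  exists gamma' => t ht; have [dg og] := Hgamma t ht.
  by split => //; apply: vderiv_of_deriv01.
have gap_disp n : orbit_gap M G vL x y n = displacement lv (fun s => iter n (hatF M G) (gamma s)).
  by rewrite /orbit_gap /displacement gamma0 gamma1.
have gap_unbounded : forall b, exists N, b < Rabs (orbit_gap M G vL x y N).
  apply: (geometric_unbounded K1 (c := Rabs (displacement lv gamma))) => [|n].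
    exact/Rabs_pos_lt/(horizontal_displacement_neq0 lw0 gamma_hor).
  rewrite gap_disp; apply: (horizontal_iter_displacement lw0 hDF (fun z => (hcone_z z).1)) => //.
  lra.
have [C GC] := sup_continuous_periodic_bounded (sup_continuous_dot lv hG_cont)
  (fun z n => f_equal _ (hG_per z n)).
have C20 : 0 <= 2 * C by have := GC x; have := Rabs_pos (dot lv (G x)); lra.
have m0 : IZR m <> 0 by move=> m0; rewrite m0 Rabs_R0 in hm; lra.
have k0 : k <> 0 by have [n [n0 <-]] := hk_att; apply: Rabs_no_R0.
apply: (affine_expanding_not_cv0 hm C20 (fun n => orbit_gap_step hvL_eig x y n GC) gap_unbounded).
exact: Phi_seq_orbit_gap_cv0 k0 m0 cvx cvy.
Qed.
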